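(* Let $X,W\in L^1$ and suppose $W$ has a continuous distribution. Then $u_\lambda^c(X;W)=0$ for every $\lambda\in(0,1]$ if and only if $\mathsf{E}(X\mid W)=0$ almost surely.
   Context: Let $(\Omega,\mathcal{F},\mathsf{P})$ be a probability space, $L^1=L^1(\mathsf{P})$, and $\mathcal{P}$ the set of probability measures on $\mathcal{F}$ absolutely continuous with respect to $\mathsf{P}$. For $\mathsf{Q}\in\mathcal{P}$, $\mathsf{E}_\mathsf{Q}X:=\mathsf{E}_\mathsf{Q}X^+-\mathsf{E}_\mathsf{Q}X^-$ with the convention $\infty-\infty=-\infty$. For $\lambda\in(0,1]$, let $\mathcal{D}_\lambda=\{\mathsf{Q}\in\mathcal{P}:d\mathsf{Q}/d\mathsf{P}\le\lambda^{-1}\}$ and $u_\lambda(X)=\inf_{\mathsf{Q}\in\mathcal{D}_\lambda}\mathsf{E}_\mathsf{Q}X$ (minus Tail V@R of order $\lambda$). The set of extreme measures of $W$ is $\mathcal{X}_{\mathcal{D}_\lambda}(W)=\{\mathsf{Q}\in\mathcal{D}_\lambda:\mathsf{E}_\mathsf{Q}W=u_\lambda(W)\in(-\infty,\infty)\}$, and the utility contribution is $u_\lambda^c(X;W)=\inf_{\mathsf{Q}\in\mathcal{X}_{\mathcal{D}_\lambda}(W)}\mathsf{E}_\mathsf{Q}X$. *)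

From HB Require Import structures.
From mathcomp Require Import all_boot all_order all_algebra.
From mathcomp Require Import all_classical all_reals all_analysis.
Set Implicit Arguments. Unset Strict Implicit. Unset Printing Implicit Defensive.
Import Order.TTheory GRing.Theory Num.Theory.
Local Open Scope classical_set_scope.
Local Open Scope ring_scope.

Section Defs.
Context (d : measure_display) (T : measurableType d) (R : realType)
  (P : probability T R).

(* A probability measure Q << P is represented by its density f = dQ/dP.
   D_lambda = { Q in P : dQ/dP <= 1/lambda }. *)
Definition density_set (lam : R) : set (T -> R) :=
  [set f : T -> R | [/\ measurable_fun setT f,
               (forall x, 0 <= f x),
               (forall x, f x <= lam^-1) &
               (\int[P]_x (f x)%:E = 1)%E]].

Definition EQ (f : T -> R) (X : T -> R) : \bar R :=
  (\int[P]_x (X x * f x)%:E)%E.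

(* u_lambda(X) = inf_{Q in D_lambda} E_Q X  (minus Tail V@R) *)
Definition u_lam (lam : R) (X : T -> R) : \bar R :=
  ereal_inf [set EQ f X | f in density_set lam].

Definition extreme_set (lam : R) (W : T -> R) : set (T -> R) :=
  [set f : T -> R | density_set lam f /\ EQ f W = u_lam lam W /\
           u_lam lam W \is a fin_num].

Definition u_contrib (lam : R) (X W : T -> R) : \bar R :=
  ereal_inf [set EQ f X | f in extreme_set lam W].

(* E(X | W) = 0 a.s., via the defining property of conditional expectation:
   E[X 1_{W in B}] = 0 for every Borel set B. *)
Definition cond_exp_zero (X W : T -> R) : Prop :=
  forall B : set R, measurable B ->
    (\int[P]_(x in W @^-1` B) (X x)%:E = 0)%E.

Definition continuous_distribution (W : T -> R) : Prop :=
  forall r : R, P (W @^-1` [set r]) = 0%E.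
End Defs.

(** For [0 < lam < 1] pick [q] with [P (W < q) = lam]; it exists because the
   law of [W] has no atoms. Then [g := lam^-1 1_{W < q}] lies in [D_lam], and
   for every [f] in [D_lam] the integrand [(W - q) (f - g)] is nonnegative with
   integral [E_f W - E_g W]. So [g] minimises [E_Q W], and any other minimiser
   equals [g] wherever [W <> q], i.e. almost surely. Hence
   [u^c_lam(X; W) = lam^-1 E[X; W < q]], while [D_1 = {P}] gives
   [u^c_1(X; W) = E X]. Thus all contributions vanish iff [E[X; W < t] = 0] for
   every [t], which by uniqueness of measures agreeing on half-lines means
   [E[X; W in B] = 0] for every Borel [B]. *)

From HB Require Import structures.
From mathcomp Require Import all_boot all_order all_algebra.
From mathcomp Require Import all_classical all_reals all_analysis.
From mathcomp Require Import measurable_realfun ring.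
Set Implicit Arguments. Unset Strict Implicit. Unset Printing Implicit Defensive.
Import Order.TTheory GRing.Theory Num.Theory.
Local Open Scope classical_set_scope.
Local Open Scope ring_scope.

Section ge0_integral_eq0.
Context d (T : measurableType d) (R : realType) (mu : {measure set T -> \bar R}).
Local Open Scope ereal_scope.

Lemma ge0_integral_eq0_ae (f : T -> R) : measurable_fun setT f ->
  (forall x, 0 <= f x)%R -> \int[mu]_x (f x)%:E = 0 ->
  {ae mu, forall x, f x = 0%R}.
Proof.
move=> mf f0 if0.
have : ae_eq mu setT (EFin \o f) (cst 0).
  apply/(ae_eq_integral_abs mu measurableT); first exact/measurable_EFinP.
  by rewrite -if0; apply: eq_integral => x _; rewrite gee0_abs ?lee_fin.
by apply: filterS => x /(_ I) [].
Qed.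

End ge0_integral_eq0.

Section densities.
Context d (T : measurableType d) (R : realType) (P : probability T R).
Local Open Scope ereal_scope.
Implicit Types (lam : R) (f g X Y W : T -> R).

Lemma integrable_density lam f : density_set P lam f ->
  P.-integrable setT (EFin \o f).
Proof.
move=> [mf f0 _ f1]; apply/integrableP; split; first exact/measurable_EFinP.
by under eq_integral do rewrite /= ger0_norm//; rewrite f1 ltry.
Qed.

Lemma integrable_mul_density lam f Y : density_set P lam f ->
  P.-integrable setT (EFin \o Y) ->
  P.-integrable setT (fun x => (Y x * f x)%:E).
Proof.
move=> [mf f0 fl _] iY.
under eq_fun do rewrite EFinM.
apply: integrableMl => //; exists lam^-1%R; split; first exact: num_real.
by move=> M hM x _ /=; rewrite ger0_norm// (le_trans (fl x)) ?ltW.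
Qed.

Lemma EQ_fin_num lam f Y : density_set P lam f ->
  P.-integrable setT (EFin \o Y) -> EQ P f Y \is a fin_num.
Proof.
move=> hf iY; apply: integrable_fin_num => //.
exact: integrable_mul_density hf iY.
Qed.

Lemma EQ_ae_eq lam f g Y : density_set P lam f -> density_set P lam g ->
  P.-integrable setT (EFin \o Y) -> ae_eq P setT f g -> EQ P f Y = EQ P g Y.
Proof.
move=> hf hg iY fg; rewrite /EQ; apply: ae_eq_integral => //.
- exact/measurable_int/(integrable_mul_density hf iY).
- exact/measurable_int/(integrable_mul_density hg iY).
- by apply: filterS fg => x h /h ->.
Qed.

Lemma integrable_subr_cst (c : R) Y : P.-integrable setT (EFin \o Y) ->
  P.-integrable setT (EFin \o (fun x => Y x - c)%R).
Proof.
move=> iY.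
have -> : EFin \o (fun x => Y x - c)%R = (EFin \o Y) \- (EFin \o cst c).
  by apply/funext => x /=; rewrite EFinB.
exact/integrableB/finite_measure_integrable_cst.
Qed.

Lemma EQ_subr_cst lam f Y (c : R) : density_set P lam f ->
  P.-integrable setT (EFin \o Y) ->
  EQ P f (fun x => Y x - c)%R = EQ P f Y - c%:E.
Proof.
move=> hf iY; have [_ _ _ f1] := hf.
have icf : P.-integrable setT (fun x => (c * f x)%:E).
  under eq_fun do rewrite EFinM.
  by apply: integrableZl => //; apply: (integrable_density hf).
rewrite /EQ; under eq_integral do rewrite mulrBl EFinB.
rewrite integralB_EFin//; last exact: integrable_mul_density hf iY.
congr (_ - _); under eq_integral do rewrite EFinM.
by rewrite integralZl ?f1 ?mule1//; exact: integrable_density hf.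
Qed.

Lemma u_contrib_unique_argmin lam g X W : density_set P lam g ->
  P.-integrable setT (EFin \o X) -> P.-integrable setT (EFin \o W) ->
  (forall f, density_set P lam f -> EQ P g W <= EQ P f W) ->
  (forall f, density_set P lam f -> EQ P f W = EQ P g W -> ae_eq P setT f g) ->
  u_contrib P lam X W = EQ P g X.
Proof.
move=> hg iX iW gmin gunique.
have uW : u_lam P lam W = EQ P g W.
  apply/le_anti/andP; split; first by apply: ereal_inf_lbound; exists g.
  by apply: le_ereal_inf_tmp => _ [f hf <-]; exact: gmin.
rewrite /u_contrib.
suff -> : [set EQ P f X | f in extreme_set P lam W] = [set EQ P g X].
  exact: ereal_inf1.
apply/seteqP; split => y /=.
- move=> [f [hf [fW _]] <-].
  by apply: (EQ_ae_eq hf hg iX); apply: (gunique f hf); rewrite fW.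
- move=> ->; exists g => //; split => //.
  by rewrite uW; split => //; exact: EQ_fin_num hg iW.
Qed.

Lemma density_set1_cst1 : density_set P 1 (cst 1%R).
Proof.
split => //= [x|]; first by rewrite invr1.
by rewrite integral_cst//= probability_setT mule1.
Qed.

Lemma density_set1_ae f : density_set P 1 f -> ae_eq P setT f (cst 1%R).
Proof.
move=> hf; have [mf f0 f1 intf] := hf.
have int0 : \int[P]_x ((1 - f x)%R)%:E = 0.
  under eq_integral do rewrite EFinB.
  rewrite integralB_EFin//; last exact: integrable_density hf.
    by rewrite intf integral_cst//= probability_setT mule1 subee.
  exact: finite_measure_integrable_cst.
have ge0 x : (0 <= 1 - f x)%R by rewrite subr_ge0 -[1%R]invr1.
have mg : measurable_fun setT (fun x => 1 - f x)%R by exact: measurable_funB.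
apply: filterS (ge0_integral_eq0_ae mg ge0 int0).
by move=> x /subr0_eq <-.
Qed.

Lemma u_contrib1 X W : P.-integrable setT (EFin \o X) ->
  P.-integrable setT (EFin \o W) -> u_contrib P 1 X W = \int[P]_x (X x)%:E.
Proof.
move=> iX iW; have h1 := density_set1_cst1.
rewrite (u_contrib_unique_argmin h1 iX iW).
- by apply: eq_integral => x _; rewrite mulr1.
- by move=> f hf; rewrite (EQ_ae_eq hf h1 iW (density_set1_ae hf)).
- by move=> f hf _; exact: density_set1_ae.
Qed.

End densities.

Definition lower_tail_density d (T : measurableType d) (R : realType)
    (lam q : R) (W : T -> R) (x : T) : R :=
  lam^-1 * \1_(W @^-1` `]-oo, q[) x.

Section lower_tail_density.
Context d (T : measurableType d) (R : realType) (P : probability T R).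
Variables (lam q : R) (W : T -> R).
Hypotheses (lam_gt0 : 0 < lam) (iW : P.-integrable setT (EFin \o W))
  (PWltq : P (W @^-1` `]-oo, q[) = lam%:E) (PWq : P (W @^-1` [set q]) = 0%E).
Local Open Scope ereal_scope.

Local Notation g := (lower_tail_density lam q W).

Let mW : measurable_fun setT W.
Proof. exact/measurable_EFinP/(measurable_int P). Qed.

Let mWltq : measurable (W @^-1` `]-oo, q[).
Proof. by rewrite -[X in measurable X]setTI; exact: mW. Qed.

Let gE x : g x = if (W x < q)%R then lam^-1%R else 0%R.
Proof.
rewrite /lower_tail_density indicE; case: ifPn => Wxq.
  by rewrite mem_set ?mulr1//= in_itv.
by rewrite memNset ?mulr0//= in_itv/=; exact/negP.
Qed.

Lemma density_set_lower_tail : density_set P lam g.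
Proof.
split.
- rewrite /lower_tail_density.
  by apply: measurable_funM => //; exact: measurable_indic.
- by move=> x; rewrite gE; case: ifP => _ //; rewrite invr_ge0 ltW.
- by move=> x; rewrite gE; case: ifP => _ //; rewrite invr_ge0 ltW.
- under eq_integral do rewrite EFinM.
  rewrite integralZl ?integral_indic ?setIT//; last exact: integrable_indic.
  transitivity (lam^-1%:E * lam%:E); first by congr (_ * _); exact: PWltq.
  by rewrite -EFinM mulVf ?gt_eqF.
Qed.

Let hg := density_set_lower_tail.

Lemma EQ_subr_lower_tail f : density_set P lam f ->
  EQ P f W - EQ P g W = \int[P]_x (((W x - q) * (f x - g x))%R)%:E.
Proof.
move=> hf; have iWq := integrable_subr_cst q iW.
under eq_integral do rewrite mulrBr EFinB.
rewrite integralB_EFin//; last first.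
- exact: integrable_mul_density hg iWq.
- exact: integrable_mul_density hf iWq.
rewrite -/(EQ P f _) -/(EQ P g _) (EQ_subr_cst q hf iW) (EQ_subr_cst q hg iW).
rewrite -(fineK (EQ_fin_num hf iW)) -(fineK (EQ_fin_num hg iW)).
by rewrite -!EFinB; congr EFin; ring.
Qed.

Lemma lower_tail_gap_ge0 f x : density_set P lam f ->
  (0 <= (W x - q) * (f x - g x))%R.
Proof.
move=> [_ f0 fl _]; rewrite gE; case: ifPn => Wxq.
  by rewrite mulr_le0// subr_le0 ?(ltW Wxq).
by rewrite subr0 mulr_ge0// subr_ge0 leNgt.
Qed.

Lemma lower_tail_argmin f : density_set P lam f -> EQ P g W <= EQ P f W.
Proof.
move=> hf; rewrite -subre_ge0 ?(EQ_fin_num hf iW)// EQ_subr_lower_tail//.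
by apply: integral_ge0 => x _; rewrite lee_fin lower_tail_gap_ge0.
Qed.

Lemma lower_tail_argmin_unique f : density_set P lam f ->
  EQ P f W = EQ P g W -> ae_eq P setT f g.
Proof.
move=> hf fW; have [mf _ _ _] := hf; have [mg _ _ _] := hg.
have int0 : \int[P]_x (((W x - q) * (f x - g x))%R)%:E = 0.
  by rewrite -EQ_subr_lower_tail// fW subee// (EQ_fin_num hg iW).
have mgap : measurable_fun setT (fun x => (W x - q) * (f x - g x))%R.
  by apply: measurable_funM; apply: measurable_funB.
have gap0 := ge0_integral_eq0_ae mgap (fun x => lower_tail_gap_ge0 x hf) int0.
have Wneq : {ae P, forall x, W x != q}.
  exists (W @^-1` [set q]); split => //.
  - by rewrite -[X in measurable X]setTI; exact: mW.
  - by move=> x /= /negP; rewrite negbK => /eqP.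
apply: filterS2 gap0 Wneq => x /eqP + Wxq _.
by rewrite mulf_eq0 subr_eq0 (negbTE Wxq) subr_eq0 => /eqP.
Qed.

Lemma u_contrib_lower_tail X : P.-integrable setT (EFin \o X) ->
  u_contrib P lam X W = lam^-1%:E * \int[P]_(x in W @^-1` `]-oo, q[) (X x)%:E.
Proof.
move=> iX; rewrite (u_contrib_unique_argmin hg iX iW lower_tail_argmin).
  rewrite /EQ -integralZl//; last exact: integrableS iX.
  rewrite [RHS]integral_mkcond; apply: eq_integral => x _.
  by rewrite epatch_indic /= -!EFinM /lower_tail_density mulrCA mulrA.
exact: lower_tail_argmin_unique.
Qed.

End lower_tail_density.

Section monotone_measure.
Context d (T : measurableType d) (R : realType).
Local Open Scope ereal_scope.

Lemma nondecreasing_bigcup_measure_le (mu : {measure set T -> \bar R})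
    (F : (set T)^nat) (c : \bar R) :
  (forall n, measurable (F n)) -> nondecreasing_seq F ->
  (forall n, mu (F n) <= c) -> mu (\bigcup_n F n) <= c.
Proof.
move=> mF ndF Fc.
apply: cvge_to_le (nondecreasing_cvg_mu mF (bigcupT_measurable F mF) ndF) _.
exact: nearW.
Qed.

Lemma nonincreasing_bigcap_measure_ge (mu : {finite_measure set T -> \bar R})
    (F : (set T)^nat) (c : \bar R) :
  (forall n, measurable (F n)) -> nonincreasing_seq F ->
  (forall n, c <= mu (F n)) -> c <= mu (\bigcap_n F n).
Proof.
move=> mF niF cF.
have muF0 : mu (F 0%N) < +oo by rewrite ltey_eq fin_num_measure.
apply: cvge_to_ge (nonincreasing_cvg_mu muF0 mF (bigcapT_measurable mF) niF) _.
exact: nearW.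
Qed.

End monotone_measure.

Section halflines.
Context (R : realType).

Lemma bigcup_itvNy_natr : \bigcup_n `]-oo, n%:R[%classic = [set: R].
Proof.
apply/seteqP; split => // x _; exists (Num.truncn x).+1 => //=.
by rewrite in_itv/= truncnS_gt.
Qed.

Lemma bigcap_itvNy_Nnatr : \bigcap_n `]-oo, - n%:R[%classic = set0 :> set R.
Proof.
apply/seteqP; split => // x /(_ (Num.truncn (- x)).+1 I).
by rewrite /= in_itv/= ltrNr => /(lt_trans (truncnS_gt _)); rewrite ltxx.
Qed.

Lemma itvNyoEbigcup (q : R) :
  `]-oo, q[%classic = \bigcup_n `]-oo, q - n.+1%:R^-1[%classic.
Proof.
apply/seteqP; split => x /=.
  rewrite in_itv/= => /ltr_add_invr[k xkq].
  by exists k => //=; rewrite in_itv/= ltrBrDr.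
move=> [k _]; rewrite /= !in_itv/= => /lt_le_trans; apply.
by rewrite gerBl invr_ge0.
Qed.

End halflines.

Section quantile.
Context d (T : measurableType d) (R : realType) (P : probability T R).
Variable W : T -> R.
Hypotheses (mW : measurable_fun setT W)
  (W_atomless : continuous_distribution P W).
Local Open Scope ereal_scope.

Local Notation F t := (P (W @^-1` `]-oo, t[)).

Let mpreW_ltNy t : measurable (W @^-1` `]-oo, t[).
Proof.
by rewrite -[X in measurable X]setTI; apply: mW => //; exact: measurable_itv.
Qed.

Let F_nondecreasing : {homo (fun t => F t) : s t / (s <= t)%R >-> s <= t}.
Proof.
move=> s t st; apply: le_measure; rewrite ?inE//.
by move=> x /=; rewrite !in_itv/= => /lt_le_trans; apply.
Qed.

Let F_itvNyc t : P (W @^-1` `]-oo, t]) = F t.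
Proof.
rewrite -(@setUitv1 _ _ _ _ true)// preimage_setU measureU//.
- by rewrite -[RHS]adde0; congr (_ + _); exact: W_atomless.
- by rewrite -[X in measurable X]setTI; exact: mW.
- rewrite -preimage_setI (_ : _ `&` _ = set0) ?preimage_set0//.
  by apply/seteqP; split => // x /= [] /[swap] ->; rewrite in_itv/= ltxx.
Qed.

Let preimage_bigcup_le (s : R^nat) c : nondecreasing_seq s ->
  (forall n, F (s n) <= c) -> P (W @^-1` \bigcup_n `]-oo, s n[%classic) <= c.
Proof.
move=> nds Fc; rewrite preimage_bigcup.
apply: nondecreasing_bigcup_measure_le Fc => // n m nm.
apply/subsetPset => x /=; rewrite !in_itv/= => /lt_le_trans; apply.
exact: nds.
Qed.

Let preimage_bigcap_ge (s : R^nat) c : nonincreasing_seq s ->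
  (forall n, c <= F (s n)) -> c <= P (W @^-1` \bigcap_n `]-oo, s n[%classic).
Proof.
move=> nis cF; rewrite preimage_bigcap.
apply: nonincreasing_bigcap_measure_ge cF => // n m nm.
apply/subsetPset => x /=; rewrite !in_itv/= => /lt_le_trans; apply.
exact: nis.
Qed.

Lemma atomless_quantile (lam : R) : (0 < lam < 1)%R ->
  exists q, P (W @^-1` `]-oo, q[) = lam%:E.
Proof.
move=> /andP[lam_gt0 lam_lt1].
have [a Fa] : exists a, F a <= lam%:E.
  apply/not_existsP => Fgt; suff : lam%:E <= 0 by rewrite lee_fin leNgt lam_gt0.
  rewrite -(measure0 P) -(preimage_set0 W) -bigcap_itvNy_Nnatr.
  apply: preimage_bigcap_ge => [n m nm|n]; first by rewrite lerN2 ler_nat.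
  by move/negP: (Fgt (- n%:R)%R); rewrite -ltNge => /ltW.
have [b Fb] : exists b, lam%:E < F b.
  apply/not_existsP => Fle; suff : 1 <= lam%:E by rewrite lee_fin leNgt lam_lt1.
  rewrite -(probability_setT P) -(preimage_setT W) -bigcup_itvNy_natr.
  apply: preimage_bigcup_le => [n m nm|n]; first by rewrite ler_nat.
  by move/negP: (Fle n%:R); rewrite -leNgt.
(* [q := sup A]: left-continuity of [F] gives [F q <= lam], and right-continuity
   of [t |-> P (W <= t)] together with [P (W = q) = 0] gives [lam <= F q]. *)
pose A := [set t | F t <= lam%:E].
have A_ub : ubound A b.
  move=> t At; rewrite leNgt; apply/negP => bt.
  have := le_lt_trans (le_trans (F_nondecreasing (ltW bt)) At) Fb.
  by rewrite ltxx.
have A_sup : has_sup A by split; [exists a | exists b].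
exists (sup A); apply/le_anti/andP; split.
- rewrite itvNyoEbigcup; apply: preimage_bigcup_le => [n m nm|n].
    by rewrite lerD2l lerN2 lef_pV2 ?posrE// ler_nat.
  have : (sup A - n.+1%:R^-1 < sup A)%R by rewrite gtrBl invr_gt0.
  by move=> /(sup_gt (proj1 A_sup))[t At /ltW/F_nondecreasing/le_trans]; apply.
- rewrite -F_itvNyc (itvNycEbigcap true).
  apply: preimage_bigcap_ge => [n m nm|n].
    by rewrite lerD2l lef_pV2 ?posrE// ler_nat.
  rewrite leNgt; apply/negP => /ltW /(sup_upper_bound A_sup).
  by rewrite gerDl leNgt invr_gt0 ltr0n.
Qed.

End quantile.

(* The image under [W] of the measure [h * P]; the measurability and
   positivity proofs are arguments so that the measure instance below is
   found from the term alone. *)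
Definition pushforward_density d (T : measurableType d) (R : realType)
    (P : probability T R) (h : T -> \bar R) (W : T -> R)
    of measurable_fun setT h & (forall x, 0 <= h x)%E & measurable_fun setT W :
    set R -> \bar R :=
  fun B => (\int[P]_(x in W @^-1` B) h x)%E.

Section pushforward_density.
Context d (T : measurableType d) (R : realType) (P : probability T R).
Variables (h : T -> \bar R) (W : T -> R).
Hypotheses (mh : measurable_fun setT h) (h_ge0 : forall x, (0 <= h x)%E)
  (mW : measurable_fun setT W).
Local Open Scope ereal_scope.

Local Notation nu := (pushforward_density P mh h_ge0 mW).

Let nu0 : nu set0 = 0.
Proof. by rewrite /pushforward_density preimage_set0 integral_set0. Qed.

Let nu_ge0 B : 0 <= nu B.
Proof. exact: integral_ge0. Qed.

Let nu_sigma_additive : semi_sigma_additive nu.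
Proof.
move=> F mF tF mUF; rewrite /pushforward_density preimage_bigcup.
apply: semi_sigma_additive_nng_induced => //.
- by move=> n; rewrite -[X in measurable X]setTI; exact: mW.
- apply/trivIsetP => /= i j _ _ ij; rewrite -preimage_setI.
  by move/trivIsetP : tF => /(_ _ _ _ _ ij) ->//; rewrite preimage_set0.
- by rewrite -preimage_bigcup -[X in measurable X]setTI; exact: mW.
Qed.

HB.instance Definition _ :=
  isMeasure.Build _ _ _ nu nu0 nu_ge0 nu_sigma_additive.

End pushforward_density.

Section cond_exp_zero_halflines.
Context d (T : measurableType d) (R : realType) (P : probability T R).
Local Open Scope ereal_scope.

Lemma cond_exp_zero_itvNy (X W : T -> R) : P.-integrable setT (EFin \o X) ->
  measurable_fun setT W ->
  (forall t, \int[P]_(x in W @^-1` `]-oo, t[) (X x)%:E = 0) ->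
  cond_exp_zero P X W.
Proof.
move=> iX mW X0 B mB.
have mX : measurable_fun setT (EFin \o X) := measurable_int P iX.
have mpre A : measurable A -> measurable (W @^-1` A).
  by move=> mA; rewrite -[X in measurable X]setTI; exact: mW.
have finp A : measurable A ->
    \int[P]_(x in W @^-1` A) (EFin \o X)^\+ x \is a fin_num.
  move=> /mpre mWA; apply: integrable_fin_num => //.
  by apply: integrable_funepos => //; exact: integrableS iX.
have finn A : measurable A ->
    \int[P]_(x in W @^-1` A) (EFin \o X)^\- x \is a fin_num.
  move=> /mpre mWA; apply: integrable_fin_num => //.
  by apply: integrable_funeneg => //; exact: integrableS iX.
have nu_eq : forall A, measurable A ->
    pushforward_density P (measurable_funepos mX) (@funepos_ge0 _ _ _) mW A =
    pushforward_density P (measurable_funeneg mX) (@funeneg_ge0 _ _ _) mW A.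
  apply: (measure_unique (@RGenInftyO.G R)
    (fun k => `]-oo, k%:R[%classic)) => //.
  - exact: RGenInftyO.measurableE.
  - move=> _ _ [a ->] [b ->]; exists (Num.min a b).
    apply/seteqP; split => x /=; rewrite !in_itv/= lt_min.
      by move=> [-> ->].
    by move=> /andP.
  - by move=> k; exists k%:R.
  - exact: bigcup_itvNy_natr.
  - move=> _ [t ->]; rewrite /pushforward_density.
    rewrite -[LHS](subeK _ (finn _ (measurable_itv `]-oo, t[))).
    by rewrite -integralE X0 add0e.
  - by move=> k; rewrite ltey_eq finp.
have := nu_eq B mB; rewrite /pushforward_density => nuB.
by rewrite integralE nuB subee ?finn.
Qed.

End cond_exp_zero_halflines.

Lemma lower_tail_integral_eq0 d (T : measurableType d) (R : realType)
    (P : probability T R) (X W : T -> R) (t : R) :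
  P.-integrable setT (EFin \o X) -> P.-integrable setT (EFin \o W) ->
  continuous_distribution P W ->
  (forall lam : R, 0 < lam <= 1 -> u_contrib P lam X W = 0%E) ->
  (\int[P]_(x in W @^-1` `]-oo, t[) (X x)%:E = 0)%E.
Proof.
move=> iX iW W_atomless contrib0.
have mW : measurable_fun setT W by exact/measurable_EFinP/(measurable_int P iW).
have mWt : measurable (W @^-1` `]-oo, t[).
  by rewrite -[X in measurable X]setTI; apply: mW => //; exact: measurable_itv.
have [lam PWt] : exists lam, P (W @^-1` `]-oo, t[) = lam%:E.
  by exists (fine (P (W @^-1` `]-oo, t[))); rewrite fineK ?fin_num_measure.
have [lam0|lam_neq0] := eqVneq lam 0.
  apply: null_set_integral => //; last by rewrite lam0 in PWt; exact: PWt.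
  exact/measurable_funTS/(measurable_int P iX).
have lam_gt0 : 0 < lam.
  by rewrite lt_neqAle eq_sym lam_neq0 -lee_fin -PWt measure_ge0.
have lam_le1 : lam <= 1 by rewrite -lee_fin -PWt probability_le1.
have := contrib0 lam; rewrite lam_gt0 lam_le1 => /(_ isT) /eqP.
rewrite (u_contrib_lower_tail lam_gt0 iW PWt (W_atomless t) iX).
by rewrite mule_eq0 eqe invr_eq0 (negbTE lam_neq0) => /eqP.
Qed.

Theorem proposition5p9 (d : measure_display) (T : measurableType d)
  (R : realType) (P : probability T R) (X W : T -> R) :
  P.-integrable setT (EFin \o X) ->
  P.-integrable setT (EFin \o W) ->
  continuous_distribution P W ->
  (forall lam : R, 0 < lam <= 1 -> u_contrib P lam X W = 0%E) <->
  cond_exp_zero P X W.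
Proof.
move=> iX iW W_atomless.
have mW : measurable_fun setT W by exact/measurable_EFinP/(measurable_int P iW).
split => [contrib0|X0 lam /andP[lam_gt0 lam_le1]].
  apply: cond_exp_zero_itvNy => // t.
  exact: lower_tail_integral_eq0 iX iW W_atomless contrib0.
have [->|lam_neq1] := eqVneq lam 1.
  by rewrite u_contrib1// -(preimage_setT W) X0.
have [|q PWq] := atomless_quantile mW W_atomless (lam := lam).
  by rewrite lam_gt0 lt_neqAle lam_neq1.
rewrite (u_contrib_lower_tail lam_gt0 iW PWq (W_atomless q) iX) X0//.
exact: mule0.
Qed.
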